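(* $(\mathbb{S},\tau)$ is a corecursive algebra for $M\otimes-\colon\mathsf{SquaMS}\to\mathsf{SquaMS}$; that is, for every coalgebra $\beta\colon B\to M\otimes B$ in $\mathsf{SquaMS}$ there is a unique morphism $\beta^*\colon B\to\mathbb{S}$ with $\beta^*=\tau\circ(M\otimes\beta^* )\circ\beta$.
   Context: Let $M_0=\{(r,s)\in[0,1]^2: r\in\{0,1\}\text{ or } s\in\{0,1\}\}$. A square metric space is a pair $(X,S_X)$ with $X$ a metric space with all distances at most $2$ and $S_X\colon M_0\to X$ injective such that (sq1) for $i\in\{0,1\}$, $r,s\in[0,1]$: $d_X(S_X(i,r),S_X(i,s))=|s-r|$ and $d_X(S_X(r,i),S_X(s,i))=|s-r|$; (sq2) $d_X(S_X(r,s),S_X(t,u))\ge|r-t|+|s-u|$. $\mathsf{SquaMS}$: these objects, with short maps $f$ satisfying $f\circ S_X=S_Y$ as morphisms. Let $N=\{0,1,2\}^2$, $M=N\setminus\{(1,1)\}$, also viewed as points of $\mathbb{R}^2$. For $X$ in $\mathsf{SquaMS}$, $M\otimes X=(M\times X)/\!\sim$, where $\sim$ is generated by $(m,S_X(p))\sim(n,S_X(q))$ whenever $m,n\in M$ differ by exactly $1$ in exactly one coordinate and $(m+p)/3=(n+q)/3$; $m\otimes x$ is the class of $(m,x)$. With $d((a,u),(b,v))=\frac13 d_X(u,v)$ if $a=b$ and $2$ otherwise, $M\otimes X$ gets the quotient metric (infimum over finite chains of sums of consecutive distances, $\sim$-related consecutive pairs counting $0$). $S_{M\otimes X}(p)=m\otimes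 S_X(3p-m)$ for any $m\in M$ with $p\in(m+[0,1]^2)/3$; $(M\otimes f)(m\otimes x)=m\otimes f(x)$. The Sierpinski carpet $\mathbb{S}$ is the unique nonempty compact $K\subseteq[0,1]^2$ with $K=\bigcup_{m\in M}\frac13(m+K)$; it carries the taxicab metric $d((x,y),(x',y'))=|x-x'|+|y-y'|$ and $S_{\mathbb{S}}$ is the inclusion of $M_0\subseteq\mathbb{S}$, making it a square metric space. $\tau\colon M\otimes\mathbb{S}\to\mathbb{S}$ is $\tau(m\otimes s)=\frac13(m+s)$. *)

From Stdlib Require Import Reals Lra Arith Bool Relations ClassicalEpsilon.
From Coquelicot Require Import Coquelicot.
Open Scope R_scope.

Definition inM0 (p : R * R) : Prop :=
  0 <= fst p <= 1 /\ 0 <= snd p <= 1 /\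
  (fst p = 0 \/ fst p = 1 \/ snd p = 0 \/ snd p = 1).

Definition inMb (m : nat * nat) : bool :=
  andb (andb (Nat.ltb (fst m) 3) (Nat.ltb (snd m) 3)) (negb (andb (Nat.eqb (fst m) 1) (Nat.eqb (snd m) 1))).
Definition Mt : Type := { m : nat * nat | inMb m = true }.
Definition M00 : Mt := exist _ (0%nat, 0%nat) eq_refl.
Definition mx (m : Mt) : R := INR (fst (proj1_sig m)).
Definition my (m : Mt) : R := INR (snd (proj1_sig m)).
Definition Mt_eqb (a b : Mt) : bool :=
  andb (Nat.eqb (fst (proj1_sig a)) (fst (proj1_sig b)))
   (Nat.eqb (snd (proj1_sig a)) (snd (proj1_sig b))).

Definition adjacent (m n : Mt) : Prop :=
  let (m1, m2) := proj1_sig m in let (n1, n2) := proj1_sig n in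
  ((m1 = S n1 \/ n1 = S m1) /\ m2 = n2) \/ (m1 = n1 /\ (m2 = S n2 \/ n2 = S m2)).

Definition in_cell (m : Mt) (p : R * R) : Prop :=
  mx m / 3 <= fst p <= (mx m + 1) / 3 /\ my m / 3 <= snd p <= (my m + 1) / 3.

(* Data of a (candidate) square metric space: carrier, distance, and S_X.
   S_X is given as a total map on R^2; only its values on M0 matter. *)
Record SqData := {
  car :> Type;
  dist : car -> car -> R;
  Sq : R * R -> car
}.

Definition is_square_ms (X : SqData) : Prop :=
  (forall x y : X, 0 <= dist X x y) /\
  (forall x y : X, dist X x y = 0 <-> x = y) /\
  (forall x y : X, dist X x y = dist X y x) /\
  (forall x y z : X, dist X x z <= dist X x y + dist X y z) /\
  (forall x y : X, dist X x y <= 2) /\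
  (forall p q, inM0 p -> inM0 q -> Sq X p = Sq X q -> p = q) /\
  (forall (i r s : R), (i = 0 \/ i = 1) -> 0 <= r <= 1 -> 0 <= s <= 1 ->
     dist X (Sq X (i, r)) (Sq X (i, s)) = Rabs (s - r) /\
     dist X (Sq X (r, i)) (Sq X (s, i)) = Rabs (s - r)) /\
  (forall p q, inM0 p -> inM0 q ->
     dist X (Sq X p) (Sq X q) >= Rabs (fst p - fst q) + Rabs (snd p - snd q)).

Definition is_morphism (X Y : SqData) (f : X -> Y) : Prop :=
  (forall x y : X, dist Y (f x) (f y) <= dist X x y) /\
  (forall p, inM0 p -> f (Sq X p) = Sq Y p).

Definition eqv {A : Type} (rel : A -> A -> Prop) : A -> A -> Prop :=
  clos_refl_sym_trans A rel.
Definition quot {A : Type} (rel : A -> A -> Prop) : Type :=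
  { P : A -> Prop | exists a, P = eqv rel a }.
Definition cls {A : Type} (rel : A -> A -> Prop) (a : A) : quot rel :=
  exist _ (eqv rel a) (ex_intro _ a eq_refl).
Definition repr {A : Type} {rel : A -> A -> Prop} (c : quot rel) : A :=
  proj1_sig (constructive_indefinite_description _ (proj2_sig c)).

Section Tensor.
Variable X : SqData.

Definition tgen (a b : Mt * X) : Prop :=
  exists p q, inM0 p /\ inM0 q /\ snd a = Sq X p /\ snd b = Sq X q /\
    adjacent (fst a) (fst b) /\
    (mx (fst a) + fst p) / 3 = (mx (fst b) + fst q) / 3 /\
    (my (fst a) + snd p) / 3 = (my (fst b) + snd q) / 3.

Definition d0 (a b : Mt * X) : R :=
  if Mt_eqb (fst a) (fst b) then dist X (snd a) (snd b) / 3 else 2.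

Inductive chain (a : Mt * X) : Mt * X -> R -> Prop :=
| ch_refl : chain a a 0
| ch_dist b c r : chain a b r -> chain a c (r + d0 b c)
| ch_rel b c r : chain a b r -> eqv tgen b c -> chain a c r.

Definition tcar : Type := quot tgen.

Definition tdist (c1 c2 : tcar) : R :=
  real (Glb_Rbar (fun r => exists a b, cls tgen a = c1 /\ cls tgen b = c2 /\ chain a b r)).

Definition tSq (p : R * R) : tcar :=
  let m := epsilon (inhabits M00) (fun m => in_cell m p) in
  cls tgen (m, Sq X (3 * fst p - mx m, 3 * snd p - my m)).

Definition tensor : SqData := {| car := tcar; dist := tdist; Sq := tSq |}.

End Tensor.

Definition tensor_elt (X : SqData) (m : Mt) (x : X) : tensor X := cls (tgen X) (m, x).

Definition Mmap (X Y : SqData) (f : X -> Y) (c : tensor X) : tensor Y :=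
  let a := @repr _ (tgen X) c in tensor_elt Y (fst a) (f (snd a)).

Fixpoint in_approx (n : nat) (p : R * R) : Prop :=
  match n with
  | O => 0 <= fst p <= 1 /\ 0 <= snd p <= 1
  | S k => exists (m : Mt) (q : R * R), in_approx k q /\
             p = ((mx m + fst q) / 3, (my m + snd q) / 3)
  end.

(* the carpet: the attractor of the IFS, i.e. the intersection of the A_n *)
Definition in_carpet (p : R * R) : Prop := forall n, in_approx n p.

Lemma carpet_origin : in_carpet (0, 0).
Proof.
  intro n; induction n as [|n IH]; simpl.
  - lra.
  - exists M00, (0, 0). split; [exact IH|]. unfold mx, my; simpl. f_equal; field.
Qed.

Definition carpet_t : Type := { p : R * R | in_carpet p }.
Definition carpet0 : carpet_t := exist _ (0, 0) carpet_origin.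

Definition to_carpet (p : R * R) : carpet_t :=
  match excluded_middle_informative (in_carpet p) with
  | left H => exist _ p H
  | right _ => carpet0
  end.

Definition taxicab (x y : carpet_t) : R :=
  Rabs (fst (proj1_sig x) - fst (proj1_sig y)) + Rabs (snd (proj1_sig x) - snd (proj1_sig y)).

(* S_S is the inclusion of M0 into the carpet *)
Definition carpet : SqData := {| car := carpet_t; dist := taxicab; Sq := to_carpet |}.

Definition tau (c : tensor carpet) : carpet :=
  let a := @repr _ (tgen carpet) c in
  let s := proj1_sig (snd a) in
  to_carpet ((mx (fst a) + fst s) / 3, (my (fst a) + snd s) / 3).

(* Write [β b] as [m ⊗ b'].  In the carpet's coordinates a solution [g] of
   [g = τ ∘ (M ⊗ g) ∘ β] satisfies [g b = (m + g b') / 3]: each coordinate of [g b] is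
   the base-3 expansion whose digits are read off by iterating [β].  This recursion
   contracts by [1/3], so it has at most one bounded solution.  For existence, iterate
   [f ↦ τ ∘ (M ⊗ f) ∘ β] starting from a morphism [B → [0,1]^2] built from the
   distances to two corners.  The iteration preserves morphisms into the square
   (shortness because [τ ∘ (M ⊗ f)] is short for the quotient metric of [M ⊗ B], the
   boundary because [τ ∘ (M ⊗ f)] respects the gluing), and it converges uniformly at
   rate [3^-n]; the limit is again a morphism, and by self-similarity it lies in the
   carpet. *)

From Pilot Require Import Defs.
From Stdlib Require Import Reals Lra Lia Bool Relations ClassicalEpsilon
  FunctionalExtensionality ProofIrrelevance.
From Coquelicot Require Import Coquelicot.
Import Defs.
Open Scope R_scope.

Ltac rabs_lra :=
  unfold Rabs in *;
  repeat match goal with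
  | H : context [Rcase_abs ?x] |- _ => destruct (Rcase_abs x)
  | |- context [Rcase_abs ?x] => destruct (Rcase_abs x)
  end; lra.

(** * Limits and infima *)

Lemma lim_geom3 (c : R) : is_lim_seq (fun n => c / 3 ^ n) 0.
Proof.
  replace 0 with (c * 0) by ring.
  apply (is_lim_seq_ext (fun n => c * (/ 3) ^ n)).
  - intro n. rewrite pow_inv. reflexivity.
  - apply (is_lim_seq_scal_l _ c 0), is_lim_seq_geom. rewrite Rabs_pos_eq; lra.
Qed.

Lemma le_of_le_plus_vanishing (x y : R) (e : nat -> R) :
  is_lim_seq e 0 -> (forall n, x <= y + e n) -> x <= y.
Proof.
  intros He Hle.
  assert (Hlim : is_lim_seq (fun n => y + e n) (y + 0))
    by exact (is_lim_seq_plus' _ _ y 0 (is_lim_seq_const y) He).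
  pose proof (is_lim_seq_le _ _ x (y + 0) Hle (is_lim_seq_const x) Hlim) as Hx.
  simpl in Hx. lra.
Qed.

Lemma eq_of_dist_vanishing (x y : R) (e : nat -> R) :
  is_lim_seq e 0 -> (forall n, Rabs (x - y) <= e n) -> x = y.
Proof.
  intros He Hd.
  assert (Rabs (x - y) <= 0)
    by (apply (le_of_le_plus_vanishing _ _ e He); intro n; rewrite Rplus_0_l; apply Hd).
  pose proof (Rabs_pos (x - y)). apply Rminus_diag_uniq, Rabs_eq_0. lra.
Qed.

Lemma Lim_seq_rate (u e : nat -> R) :
  is_lim_seq e 0 -> (forall n k, Rabs (u (n + k)%nat - u n) <= e n) ->
  forall n, Rabs (real (Lim_seq u) - u n) <= e n.
Proof.
  intros He Hu.
  assert (Hcauchy : ex_lim_seq_cauchy u).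
  { intro eps. destruct (proj2 (is_lim_seq_spec e 0) He (pos_div_2 eps)) as [N HN].
    exists N. intros n m Hn Hm.
    specialize (HN N (Nat.le_refl N)). simpl in HN.
    pose proof (Hu N (n - N)%nat) as Hn'. pose proof (Hu N (m - N)%nat) as Hm'.
    replace (N + (n - N))%nat with n in Hn' by lia.
    replace (N + (m - N))%nat with m in Hm' by lia.
    rabs_lra. }
  destruct (proj2 (ex_lim_seq_cauchy_corr u) Hcauchy) as [l Hl].
  rewrite (is_lim_seq_unique _ _ Hl). simpl. intro n.
  pose proof (proj1 (is_lim_seq_incr_n u n l) Hl) as Hn.
  assert (Hup : Rbar_le l (u n + e n)).
  { refine (is_lim_seq_le _ _ _ _ _ Hn (is_lim_seq_const _)).
    intro k. rewrite Nat.add_comm. specialize (Hu n k). rabs_lra. }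
  assert (Hlow : Rbar_le (u n - e n) l).
  { refine (is_lim_seq_le _ _ _ _ _ (is_lim_seq_const _) Hn).
    intro k. rewrite Nat.add_comm. specialize (Hu n k). rabs_lra. }
  simpl in Hup, Hlow. rabs_lra.
Qed.

Lemma le_real_Glb_Rbar (E : R -> Prop) (L r0 : R) :
  E r0 -> (forall r, E r -> L <= r) -> L <= real (Glb_Rbar E).
Proof.
  intros H0 HL. destruct (Glb_Rbar_correct E) as [Hlb Hglb].
  assert (A1 : Rbar_le (Glb_Rbar E) r0) by (apply Hlb; auto).
  assert (A2 : Rbar_le L (Glb_Rbar E)) by (apply Hglb; intros r Hr; apply HL; auto).
  destruct (Glb_Rbar E); simpl in *; try contradiction; auto.
Qed.

(** * Ternary expansions along a shift *)

Section TernaryExpansion.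

Variables (T : Type) (digit : T -> R) (shift : T -> T).
Hypothesis digit_range : forall t, 0 <= digit t <= 2.

Definition unit_valued (u : T -> R) : Prop := forall t, 0 <= u t <= 1.

Definition expand_step (u : T -> R) (t : T) : R := (digit t + u (shift t)) / 3.

Lemma expand_step_unit_valued (u : T -> R) : unit_valued u -> unit_valued (expand_step u).
Proof.
  intros Hu t. unfold expand_step. pose proof (Hu (shift t)). pose proof (digit_range t). lra.
Qed.

Lemma iter_expand_step_unit_valued (n : nat) (u : T -> R) :
  unit_valued u -> unit_valued (Nat.iter n expand_step u).
Proof. intro Hu. induction n as [|n IH]; [exact Hu | exact (expand_step_unit_valued _ IH)]. Qed.

Lemma iter_expand_step_close (n : nat) (u v : T -> R) :
  unit_valued u -> unit_valued v ->
  forall t, Rabs (Nat.iter n expand_step u t - Nat.iter n expand_step v t) <= 1 / 3 ^ n.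
Proof.
  intros Hu Hv. induction n as [|n IH]; intro t.
  - pose proof (Hu t). pose proof (Hv t). simpl. rabs_lra.
  - specialize (IH (shift t)). pose proof (pow_lt 3 n ltac:(lra)).
    change (Rabs ((digit t + Nat.iter n expand_step u (shift t)) / 3
                  - (digit t + Nat.iter n expand_step v (shift t)) / 3) <= 1 / (3 * 3 ^ n)).
    replace (1 / (3 * 3 ^ n)) with (1 / 3 ^ n / 3) by (field; lra).
    rabs_lra.
Qed.

Lemma iter_expand_step_S (n : nat) (u : T -> R) (t : T) :
  Nat.iter (S n) expand_step u t = (digit t + Nat.iter n expand_step u (shift t)) / 3.
Proof. reflexivity. Qed.

Lemma iter_expand_step_fixed (u : T -> R) :
  (forall t, u t = expand_step u t) -> forall n t, Nat.iter n expand_step u t = u t.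
Proof.
  intros Hu n. induction n as [|n IH]; intro t; [reflexivity|].
  simpl. unfold expand_step at 1. rewrite IH. symmetry. apply Hu.
Qed.

Lemma expand_fixed_unique (u v : T -> R) :
  unit_valued u -> unit_valued v ->
  (forall t, u t = expand_step u t) -> (forall t, v t = expand_step v t) ->
  forall t, u t = v t.
Proof.
  intros Hu Hv Fu Fv t. apply (eq_of_dist_vanishing _ _ _ (lim_geom3 1)). intro n.
  rewrite <- (iter_expand_step_fixed u Fu n t), <- (iter_expand_step_fixed v Fv n t).
  exact (iter_expand_step_close n u v Hu Hv t).
Qed.

Definition expansion (u0 : T -> R) (t : T) : R :=
  real (Lim_seq (fun n => Nat.iter n expand_step u0 t)).

Variable u0 : T -> R.
Hypothesis u0_unit : unit_valued u0.

Lemma expansion_close (n : nat) (t : T) :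
  Rabs (expansion u0 t - Nat.iter n expand_step u0 t) <= 1 / 3 ^ n.
Proof.
  apply (Lim_seq_rate (fun n => Nat.iter n expand_step u0 t) _ (lim_geom3 1)).
  intros m k. rewrite Nat.iter_add.
  apply iter_expand_step_close; [apply iter_expand_step_unit_valued|]; exact u0_unit.
Qed.

Lemma expansion_fixed (t : T) : expansion u0 t = expand_step (expansion u0) t.
Proof.
  apply (eq_of_dist_vanishing _ _ _ (lim_geom3 1)). intro n.
  pose proof (expansion_close (S n) t) as Ht.
  pose proof (expansion_close n (shift t)) as Hs.
  pose proof (pow_lt 3 n ltac:(lra)).
  change (Rabs (expansion u0 t - (digit t + Nat.iter n expand_step u0 (shift t)) / 3)
          <= 1 / (3 * 3 ^ n)) in Ht.
  unfold expand_step.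
  replace (1 / (3 * 3 ^ n)) with (1 / 3 ^ n / 3) in Ht by (field; lra).
  rabs_lra.
Qed.

End TernaryExpansion.

Arguments unit_valued {T}.
Arguments expand_step {T}.
Arguments expansion {T}.

(** * Morphisms into the unit square *)

Definition taxi (p q : R * R) : R := Rabs (fst p - fst q) + Rabs (snd p - snd q).

Definition in_unit_square (p : R * R) : Prop := 0 <= fst p <= 1 /\ 0 <= snd p <= 1.

Record square_morphism (X : SqData) (g : X -> R * R) : Prop := {
  sqm_in_square : forall x, in_unit_square (g x);
  sqm_boundary : forall p, inM0 p -> g (Sq X p) = p;
  sqm_short : forall x y, taxi (g x) (g y) <= dist X x y }.

Lemma taxi_triangle (p q r : R * R) : taxi p r <= taxi p q + taxi q r.
Proof. unfold taxi. rabs_lra. Qed.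

Lemma taxi_le_0 (p q : R * R) : taxi p q <= 0 -> p = q.
Proof.
  destruct p as [p1 p2], q as [q1 q2]. unfold taxi. simpl. intro H.
  pose proof (Rabs_pos (p1 - q1)). pose proof (Rabs_pos (p2 - q2)).
  f_equal; apply Rminus_diag_uniq, Rabs_eq_0; lra.
Qed.

Lemma square_morphism_comp (X Y : SqData) (h : X -> Y) (g : Y -> R * R) :
  is_morphism X Y h -> square_morphism Y g -> square_morphism X (fun x => g (h x)).
Proof.
  intros [Hshort Hbound] [Hsq Hbd Hsh]. split.
  - intro x. apply Hsq.
  - intros p Hp. rewrite Hbound by exact Hp. apply Hbd, Hp.
  - intros x y. eapply Rle_trans; [apply Hsh | apply Hshort].
Qed.

Lemma square_morphism_uniform_limit (X : SqData) (g : X -> R * R)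
    (gs : nat -> X -> R * R) (e : nat -> R) :
  is_lim_seq e 0 -> (forall n, square_morphism X (gs n)) ->
  (forall n x, taxi (g x) (gs n x) <= e n) -> square_morphism X g.
Proof.
  intros He Hgs Hclose. split.
  - intro x.
    assert (Happrox : forall n, - fst (g x) <= 0 + e n /\ fst (g x) <= 1 + e n /\
                                - snd (g x) <= 0 + e n /\ snd (g x) <= 1 + e n).
    { intro n. pose proof (sqm_in_square _ _ (Hgs n) x). pose proof (Hclose n x).
      unfold in_unit_square, taxi in *. rabs_lra. }
    assert (- fst (g x) <= 0) by (apply (le_of_le_plus_vanishing _ _ e He); apply Happrox).
    assert (fst (g x) <= 1) by (apply (le_of_le_plus_vanishing _ _ e He); apply Happrox).
    assert (- snd (g x) <= 0) by (apply (le_of_le_plus_vanishing _ _ e He); apply Happrox).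
    assert (snd (g x) <= 1) by (apply (le_of_le_plus_vanishing _ _ e He); apply Happrox).
    unfold in_unit_square. lra.
  - intros p Hp. apply taxi_le_0, (le_of_le_plus_vanishing _ _ e He). intro n.
    pose proof (Hclose n (Sq X p)) as Hn. rewrite (sqm_boundary _ _ (Hgs n) p Hp) in Hn. lra.
  - intros x y.
    assert (He2 : is_lim_seq (fun n => e n + e n) 0).
    { rewrite <- (Rplus_0_l 0). exact (is_lim_seq_plus' _ _ 0 0 He He). }
    apply (le_of_le_plus_vanishing _ _ _ He2). intro n.
    pose proof (sqm_short _ _ (Hgs n) x y).
    pose proof (Hclose n x). pose proof (Hclose n y).
    pose proof (taxi_triangle (g x) (gs n x) (g y)).
    pose proof (taxi_triangle (gs n x) (gs n y) (g y)).
    assert (taxi (gs n y) (g y) = taxi (g y) (gs n y)) by (unfold taxi; rabs_lra).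
    lra.
Qed.

Lemma dist_corners (X : SqData) :
  is_square_ms X -> forall p, inM0 p ->
  dist X (Sq X p) (Sq X (0, 0)) = fst p + snd p /\
  dist X (Sq X p) (Sq X (0, 1)) = fst p + 1 - snd p.
Proof.
  intros (_ & _ & _ & Htri & _ & _ & Hsq1 & Hsq2) p Hp.
  (* (sq2) gives the lower bounds; (sq1) along the boundary and the triangle
     inequality give the upper ones. *)
  assert (M00 : inM0 (0, 0)) by (unfold inM0; simpl; lra).
  assert (M01 : inM0 (0, 1)) by (unfold inM0; simpl; lra).
  pose proof (Hsq2 p (0, 0) Hp M00) as L1.
  pose proof (Hsq2 p (0, 1) Hp M01) as L2.
  destruct p as [x y]. destruct Hp as (Hx & Hy & Hb). simpl in *.
  assert (Z : 0 <= 0 <= 1) by lra. assert (O : 0 <= 1 <= 1) by lra.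
  assert (E0 : (0:R) = 0 \/ (0:R) = 1) by (left; reflexivity).
  assert (E1 : (1:R) = 0 \/ (1:R) = 1) by (right; reflexivity).
  destruct Hb as [H|[H|[H|H]]]; subst.
  - destruct (Hsq1 0 y 0 E0 Hy Z) as [A _]. destruct (Hsq1 0 y 1 E0 Hy O) as [C _].
    split; rabs_lra.
  - destruct (Hsq1 1 y 0 E1 Hy Z) as [A _]. destruct (Hsq1 0 1 0 E0 O Z) as [_ A2].
    destruct (Hsq1 1 y 1 E1 Hy O) as [C _]. destruct (Hsq1 1 1 0 E1 O Z) as [_ C2].
    pose proof (Htri (Sq X (1, y)) (Sq X (1, 0)) (Sq X (0, 0))).
    pose proof (Htri (Sq X (1, y)) (Sq X (1, 1)) (Sq X (0, 1))).
    split; rabs_lra.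
  - destruct (Hsq1 0 x 0 E0 Hx Z) as [_ A]. destruct (Hsq1 0 0 1 E0 Z O) as [C _].
    pose proof (Htri (Sq X (x, 0)) (Sq X (0, 0)) (Sq X (0, 1))).
    split; rabs_lra.
  - destruct (Hsq1 1 x 0 E1 Hx Z) as [_ A]. destruct (Hsq1 0 1 0 E0 O Z) as [C _].
    pose proof (Htri (Sq X (x, 1)) (Sq X (0, 1)) (Sq X (0, 0))).
    split; rabs_lra.
Qed.

Definition clamp (t : R) : R := Rmax 0 (Rmin 1 t).

Lemma clamp_unit (t : R) : 0 <= clamp t <= 1.
Proof. unfold clamp, Rmax, Rmin; repeat destruct Rle_dec; lra. Qed.

Lemma clamp_id (t : R) : 0 <= t <= 1 -> clamp t = t.
Proof. unfold clamp, Rmax, Rmin; repeat destruct Rle_dec; lra. Qed.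

Lemma clamp_lipschitz (s t : R) : Rabs (clamp s - clamp t) <= Rabs (s - t).
Proof. unfold clamp, Rmax, Rmin; repeat destruct Rle_dec; rabs_lra. Qed.

(* With [u = d(x, S(0,0))] and [v = d(x, S(0,1)) - 1], a boundary point [S(s,t)] has
   [u = s + t] and [v = s - t]; the chart [((u+v)/2, (u-v)/2)] is short because
   [|a+b|/2 + |a-b|/2 = max(|a|,|b|)] and [u], [v] are 1-Lipschitz. *)
Definition corner_chart (X : SqData) (x : X) : R * R :=
  let u := dist X x (Sq X (0, 0)) in
  let v := dist X x (Sq X (0, 1)) - 1 in
  (clamp ((u + v) / 2), clamp ((u - v) / 2)).

Lemma corner_chart_square_morphism (X : SqData) :
  is_square_ms X -> square_morphism X (corner_chart X).
Proof.
  intro HX. split.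
  - intro x. split; apply clamp_unit.
  - intros p Hp. destruct (dist_corners X HX p Hp) as [D0 D1].
    unfold corner_chart. rewrite D0, D1.
    destruct p as [x y], Hp as (Hx & Hy & _); simpl in *.
    f_equal; rewrite clamp_id; (field || lra).
  - destruct HX as (_ & _ & Hsym & Htri & _). intros x y. unfold taxi, corner_chart; simpl.
    set (u := fun z => dist X z (Sq X (0, 0))). set (v := fun z => dist X z (Sq X (0, 1))).
    pose proof (clamp_lipschitz ((u x + (v x - 1)) / 2) ((u y + (v y - 1)) / 2)).
    pose proof (clamp_lipschitz ((u x - (v x - 1)) / 2) ((u y - (v y - 1)) / 2)).
    pose proof (Htri x y (Sq X (0, 0))). pose proof (Htri y x (Sq X (0, 0))).
    pose proof (Htri x y (Sq X (0, 1))). pose proof (Htri y x (Sq X (0, 1))).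
    pose proof (Hsym x y). unfold u, v in *. rabs_lra.
Qed.

(** * The tensor [M ⊗ X] read through the square *)

Lemma eqv_invariant {A C : Type} (rel : A -> A -> Prop) (f : A -> C) :
  (forall a b, rel a b -> f a = f b) -> forall a b, eqv rel a b -> f a = f b.
Proof. intros Hf a b E. induction E; congruence || auto. Qed.

Lemma eqv_repr_cls {A : Type} (rel : A -> A -> Prop) (a : A) : eqv rel a (repr (cls rel a)).
Proof.
  unfold repr, cls; simpl.
  destruct (constructive_indefinite_description _ _) as [a' Ha']. simpl.
  rewrite Ha'. apply rst_refl.
Qed.

Lemma cls_repr {A : Type} (rel : A -> A -> Prop) (c : quot rel) : cls rel (repr c) = c.
Proof.
  destruct c as [P HP]. unfold cls, repr; simpl.
  destruct (constructive_indefinite_description _ HP) as [a Ha]; simpl.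
  apply subset_eq_compat. symmetry; exact Ha.
Qed.

Lemma mx_my_bounds (m : Mt) : 0 <= mx m <= 2 /\ 0 <= my m <= 2.
Proof.
  destruct m as [[i j] H]. unfold mx, my, inMb in *; simpl in *.
  apply andb_prop in H as [H _]. apply andb_prop in H as [H1 H2].
  apply Nat.ltb_lt in H1; apply Nat.ltb_lt in H2.
  split; split; try apply pos_INR; replace 2 with (INR 2) by (simpl; lra); apply le_INR; lia.
Qed.

Lemma Mt_eqb_coords (a b : Mt) : Mt_eqb a b = true -> mx a = mx b /\ my a = my b.
Proof.
  unfold Mt_eqb, mx, my. intro H. apply andb_prop in H as [H1 H2].
  apply Nat.eqb_eq in H1; apply Nat.eqb_eq in H2. rewrite H1, H2. auto.
Qed.

Lemma third_exists (t : R) :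
  0 <= t <= 1 ->
  exists k : nat, (k < 3)%nat /\ INR k / 3 <= t <= (INR k + 1) / 3 /\
    (t = 0 -> k = 0%nat) /\ (t = 1 -> k = 2%nat).
Proof.
  intro Ht. destruct (Rle_lt_dec t (1 / 3)); [exists 0%nat|];
    [|destruct (Rle_lt_dec t (2 / 3)); [exists 1%nat | exists 2%nat]];
    simpl; repeat split; intros; (lia || lra).
Qed.

Lemma boundary_in_cell (p : R * R) : inM0 p -> exists m, in_cell m p.
Proof.
  destruct p as [x y]. intros (Hx & Hy & Hb). simpl in *.
  destruct (third_exists x Hx) as (i & Hi & Hix & Hi0 & Hi1).
  destruct (third_exists y Hy) as (j & Hj & Hjy & Hj0 & Hj1).
  assert (Hm : inMb (i, j) = true).
  { unfold inMb; simpl. apply Nat.ltb_lt in Hi, Hj. rewrite Hi, Hj. simpl.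
    destruct Hb as [H|[H|[H|H]]];
      [rewrite (Hi0 H) | rewrite (Hi1 H) | rewrite (Hj0 H) | rewrite (Hj1 H)];
      simpl; rewrite ?andb_false_r; reflexivity. }
  exists (exist _ (i, j) Hm). unfold in_cell, mx, my; simpl. auto.
Qed.

Lemma in_cell_boundary (m : Mt) (p : R * R) :
  inM0 p -> in_cell m p -> inM0 (3 * fst p - mx m, 3 * snd p - my m).
Proof.
  destruct p as [x y]; unfold inM0, in_cell; simpl.
  pose proof (mx_my_bounds m) as Hm.
  intros (Hx & Hy & Hb) (C1 & C2).
  split; [lra|]. split; [lra|].
  destruct Hb as [H|[H|[H|H]]]; [left|right;left|right;right;left|right;right;right]; lra.
Qed.

Definition cell_image (X : SqData) (g : X -> R * R) (a : Mt * X) : R * R :=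
  ((mx (fst a) + fst (g (snd a))) / 3, (my (fst a) + snd (g (snd a))) / 3).

(* [tau ∘ (M ⊗ g)], with [[0,1]^2] in place of the carpet, computed on a representative. *)
Definition tensor_chart (X : SqData) (g : X -> R * R) (c : tensor X) : R * R :=
  cell_image X g (repr c).

Section TensorChart.

Variables (X : SqData) (g : X -> R * R).

Lemma cell_image_tgen :
  (forall p, inM0 p -> g (Sq X p) = p) ->
  forall a c, tgen X a c -> cell_image X g a = cell_image X g c.
Proof.
  intros Hg a c (p & q & Hp & Hq & Ha & Hc & _ & E1 & E2).
  unfold cell_image. rewrite Ha, Hc, (Hg p Hp), (Hg q Hq). f_equal; lra.
Qed.

Lemma tensor_chart_cls :
  (forall p, inM0 p -> g (Sq X p) = p) ->
  forall a, tensor_chart X g (cls (tgen X) a) = cell_image X g a.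
Proof.
  intros Hg a. symmetry. unfold tensor_chart.
  apply (eqv_invariant _ _ (cell_image_tgen Hg)), eqv_repr_cls.
Qed.

Lemma cell_image_in_square (a : Mt * X) :
  in_unit_square (g (snd a)) -> in_unit_square (cell_image X g a).
Proof.
  unfold in_unit_square, cell_image; simpl. pose proof (mx_my_bounds (fst a)). lra.
Qed.

Hypothesis g_morphism : square_morphism X g.

Lemma taxi_cell_image_le_d0 (a c : Mt * X) :
  taxi (cell_image X g a) (cell_image X g c) <= d0 X a c.
Proof.
  unfold d0. destruct (Mt_eqb (fst a) (fst c)) eqn:E.
  - destruct (Mt_eqb_coords _ _ E) as [E1 E2].
    pose proof (sqm_short _ _ g_morphism (snd a) (snd c)).
    unfold taxi, cell_image in *; simpl. rewrite E1, E2. rabs_lra.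
  - pose proof (cell_image_in_square a (sqm_in_square _ _ g_morphism _)).
    pose proof (cell_image_in_square c (sqm_in_square _ _ g_morphism _)).
    unfold in_unit_square, taxi in *. rabs_lra.
Qed.

Lemma taxi_cell_image_le_chain (a c : Mt * X) (r : R) :
  chain X a c r -> taxi (cell_image X g a) (cell_image X g c) <= r.
Proof.
  induction 1 as [|b c r _ IH|b c r _ IH Ebc].
  - unfold taxi. rabs_lra.
  - pose proof (taxi_cell_image_le_d0 b c).
    pose proof (taxi_triangle (cell_image X g a) (cell_image X g b) (cell_image X g c)). lra.
  - rewrite <- (eqv_invariant _ _ (cell_image_tgen (sqm_boundary _ _ g_morphism)) b c Ebc).
    exact IH.
Qed.

End TensorChart.

Lemma tensor_chart_boundary (X : SqData) (g : X -> R * R) :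
  (forall p, inM0 p -> g (Sq X p) = p) ->
  forall p, inM0 p -> tensor_chart X g (Sq (tensor X) p) = p.
Proof.
  intros Hg p Hp. change (Sq (tensor X) p) with (tSq X p). unfold tSq.
  set (m := epsilon (inhabits M00) (fun m => in_cell m p)).
  assert (Hm : in_cell m p) by (apply epsilon_spec, boundary_in_cell, Hp).
  rewrite tensor_chart_cls by exact Hg. unfold cell_image; simpl.
  rewrite Hg by (apply in_cell_boundary; assumption).
  destruct p; simpl; f_equal; field.
Qed.

Lemma tensor_chart_square_morphism (X : SqData) (g : X -> R * R) :
  square_morphism X g -> square_morphism (tensor X) (tensor_chart X g).
Proof.
  intro Hg. split.
  - intro c. apply cell_image_in_square, (sqm_in_square _ _ Hg).
  - apply tensor_chart_boundary, (sqm_boundary _ _ Hg).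
  - intros c1 c2. change (taxi (tensor_chart X g c1) (tensor_chart X g c2) <= tdist X c1 c2).
    apply le_real_Glb_Rbar with (r0 := 0 + d0 X (repr c1) (repr c2)).
    + exists (repr c1), (repr c2). split; [apply cls_repr | split; [apply cls_repr |]].
      apply ch_dist, ch_refl.
    + intros r (a & b & <- & <- & Hch).
      rewrite !tensor_chart_cls by exact (sqm_boundary _ _ Hg).
      exact (taxi_cell_image_le_chain X g Hg a b r Hch).
Qed.

(** * The carpet and the coalgebra recursion *)

Lemma M0_in_carpet (p : R * R) : inM0 p -> in_carpet p.
Proof.
  intros Hp n. revert p Hp. induction n as [|n IH]; intros p Hp.
  - destruct Hp as (Hx & Hy & _). exact (conj Hx Hy).
  - destruct (boundary_in_cell p Hp) as [m Hm].
    exists m, (3 * fst p - mx m, 3 * snd p - my m).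
    split; [apply IH, in_cell_boundary; assumption|].
    destruct p; simpl; f_equal; field.
Qed.

Lemma carpet_in_square (s : R * R) : in_carpet s -> in_unit_square s.
Proof. intro H. exact (H 0%nat). Qed.

Lemma in_carpet_cell (m : Mt) (s : R * R) :
  in_carpet s -> in_carpet ((mx m + fst s) / 3, (my m + snd s) / 3).
Proof.
  intros H [|n].
  - pose proof (carpet_in_square s H). pose proof (mx_my_bounds m).
    unfold in_unit_square in *. simpl. lra.
  - exists m, s. split; [apply H | reflexivity].
Qed.

Lemma val_to_carpet (p : R * R) : in_carpet p -> proj1_sig (to_carpet p) = p.
Proof.
  intro H. unfold to_carpet.
  destruct excluded_middle_informative; [reflexivity | contradiction].
Qed.

Lemma carpet_val_inj (s t : carpet_t) : proj1_sig s = proj1_sig t -> s = t.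
Proof. destruct s, t; simpl; intro; subst; f_equal; apply proof_irrelevance. Qed.

Lemma tau_Mmap (X : SqData) (h : X -> carpet) (c : tensor X) :
  tau (Mmap X carpet h c) = to_carpet (tensor_chart X (fun x => proj1_sig (h x)) c).
Proof.
  assert (Hval : forall p, inM0 p -> proj1_sig (Sq carpet p) = p)
    by (intros p Hp; apply val_to_carpet, M0_in_carpet, Hp).
  change (tau ?d) with (to_carpet (tensor_chart carpet (fun s => proj1_sig s) d)).
  unfold Mmap, tensor_elt. rewrite tensor_chart_cls by exact Hval. reflexivity.
Qed.

Lemma carpet_morphism_of_square (X : SqData) (h : X -> carpet) :
  square_morphism X (fun x => proj1_sig (h x)) -> is_morphism X carpet h.
Proof.
  intros [_ Hbd Hsh]. split.
  - exact Hsh.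
  - intros p Hp. apply carpet_val_inj. rewrite Hbd by exact Hp.
    symmetry. apply val_to_carpet, M0_in_carpet, Hp.
Qed.

Section Coalgebra.

Variables (B : SqData) (beta : B -> tensor B).

Definition coalg_step (g : B -> R * R) (b : B) : R * R := tensor_chart B g (beta b).

Definition coalg_digit_x (b : B) : R := mx (fst (repr (beta b))).
Definition coalg_digit_y (b : B) : R := my (fst (repr (beta b))).
Definition coalg_shift (b : B) : B := snd (repr (beta b)).

Lemma coalg_digit_x_range (b : B) : 0 <= coalg_digit_x b <= 2.
Proof. apply mx_my_bounds. Qed.

Lemma coalg_digit_y_range (b : B) : 0 <= coalg_digit_y b <= 2.
Proof. apply mx_my_bounds. Qed.

Definition is_solution (h : B -> carpet) : Prop :=
  forall b, h b = tau (Mmap B carpet h (beta b)).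

Lemma solution_fixed (h : B -> carpet) :
  is_solution h -> forall b, proj1_sig (h b) = coalg_step (fun b => proj1_sig (h b)) b.
Proof.
  intros Hh b. rewrite (Hh b) at 1. rewrite tau_Mmap. apply val_to_carpet.
  apply in_carpet_cell, proj2_sig.
Qed.

Lemma solutions_unique (h1 h2 : B -> carpet) : is_solution h1 -> is_solution h2 -> h1 = h2.
Proof.
  intros H1 H2. apply functional_extensionality. intro b. apply carpet_val_inj.
  pose proof (fun t => carpet_in_square _ (proj2_sig (h1 t))) as S1.
  pose proof (fun t => carpet_in_square _ (proj2_sig (h2 t))) as S2.
  apply injective_projections.
  - apply (expand_fixed_unique _ coalg_digit_x coalg_shift
             (fun t => fst (proj1_sig (h1 t))) (fun t => fst (proj1_sig (h2 t)))).
    + intro t. apply S1.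
    + intro t. apply S2.
    + intro t. exact (f_equal fst (solution_fixed h1 H1 t)).
    + intro t. exact (f_equal fst (solution_fixed h2 H2 t)).
  - apply (expand_fixed_unique _ coalg_digit_y coalg_shift
             (fun t => snd (proj1_sig (h1 t))) (fun t => snd (proj1_sig (h2 t)))).
    + intro t. apply S1.
    + intro t. apply S2.
    + intro t. exact (f_equal snd (solution_fixed h1 H1 t)).
    + intro t. exact (f_equal snd (solution_fixed h2 H2 t)).
Qed.

Hypotheses (HB : is_square_ms B) (Hbeta : is_morphism B (tensor B) beta).

Definition coalg_approx (n : nat) : B -> R * R := Nat.iter n coalg_step (corner_chart B).

Lemma coalg_approx_square_morphism (n : nat) : square_morphism B (coalg_approx n).
Proof.
  induction n as [|n IH]; [exact (corner_chart_square_morphism B HB)|].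
  exact (square_morphism_comp _ _ _ _ Hbeta (tensor_chart_square_morphism _ _ IH)).
Qed.

Lemma fst_coalg_approx (n : nat) (b : B) :
  fst (coalg_approx n b) =
  Nat.iter n (expand_step coalg_digit_x coalg_shift) (fun b => fst (corner_chart B b)) b.
Proof.
  induction n as [|n IH] in b |- *; [reflexivity|].
  rewrite iter_expand_step_S, <- IH. reflexivity.
Qed.

Lemma snd_coalg_approx (n : nat) (b : B) :
  snd (coalg_approx n b) =
  Nat.iter n (expand_step coalg_digit_y coalg_shift) (fun b => snd (corner_chart B b)) b.
Proof.
  induction n as [|n IH] in b |- *; [reflexivity|].
  rewrite iter_expand_step_S, <- IH. reflexivity.
Qed.

Definition coalg_chart (b : B) : R * R :=
  (expansion coalg_digit_x coalg_shift (fun b => fst (corner_chart B b)) b,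
   expansion coalg_digit_y coalg_shift (fun b => snd (corner_chart B b)) b).

Lemma corner_chart_fst_unit : unit_valued (fun b => fst (corner_chart B b)).
Proof. intro b. apply (sqm_in_square _ _ (corner_chart_square_morphism B HB)). Qed.

Lemma corner_chart_snd_unit : unit_valued (fun b => snd (corner_chart B b)).
Proof. intro b. apply (sqm_in_square _ _ (corner_chart_square_morphism B HB)). Qed.

Lemma coalg_chart_close (n : nat) (b : B) : taxi (coalg_chart b) (coalg_approx n b) <= 2 / 3 ^ n.
Proof.
  unfold taxi, coalg_chart; cbn [fst snd]. rewrite fst_coalg_approx, snd_coalg_approx.
  pose proof (expansion_close _ coalg_digit_x coalg_shift coalg_digit_x_range _
                corner_chart_fst_unit n b).
  pose proof (expansion_close _ coalg_digit_y coalg_shift coalg_digit_y_range _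
                corner_chart_snd_unit n b).
  replace (2 / 3 ^ n) with (1 / 3 ^ n + 1 / 3 ^ n) by (field; apply pow_nonzero; lra).
  lra.
Qed.

Lemma coalg_chart_square_morphism : square_morphism B coalg_chart.
Proof.
  exact (square_morphism_uniform_limit B coalg_chart coalg_approx _ (lim_geom3 2)
           coalg_approx_square_morphism coalg_chart_close).
Qed.

Lemma coalg_chart_fixed (b : B) : coalg_chart b = coalg_step coalg_chart b.
Proof.
  apply injective_projections.
  - exact (expansion_fixed _ coalg_digit_x coalg_shift coalg_digit_x_range _
             corner_chart_fst_unit b).
  - exact (expansion_fixed _ coalg_digit_y coalg_shift coalg_digit_y_range _
             corner_chart_snd_unit b).
Qed.

Lemma coalg_chart_in_carpet (b : B) : in_carpet (coalg_chart b).
Proof.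
  intro n. revert b. induction n as [|n IH]; intro b.
  - exact (sqm_in_square _ _ coalg_chart_square_morphism b).
  - rewrite coalg_chart_fixed.
    exists (fst (repr (beta b))), (coalg_chart (coalg_shift b)). split; [apply IH | reflexivity].
Qed.

End Coalgebra.

Theorem mainTheorem4 :
  forall (B : SqData), is_square_ms B ->
  forall (beta : B -> tensor B), is_morphism B (tensor B) beta ->
  exists! (bstar : B -> carpet),
    is_morphism B carpet bstar /\
    (forall b : B, bstar b = tau (Mmap B carpet bstar (beta b))).
Proof.
  intros B HB beta Hbeta.
  set (bstar := fun b => to_carpet (coalg_chart B beta b)).
  assert (Hval : (fun b => proj1_sig (bstar b)) = coalg_chart B beta).
  { apply functional_extensionality. intro b.
    apply val_to_carpet, coalg_chart_in_carpet; assumption. }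
  assert (Hsol : is_solution B beta bstar).
  { intro b. rewrite tau_Mmap, Hval. unfold bstar at 1. f_equal.
    apply coalg_chart_fixed; assumption. }
  exists bstar. split.
  - split; [|exact Hsol]. apply carpet_morphism_of_square. rewrite Hval.
    apply coalg_chart_square_morphism; assumption.
  - intros h [_ Hh]. exact (solutions_unique B beta bstar h Hsol Hh).
Qed.
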